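(* Consider a merge junction with incoming links $I_1=[a_1,b_1]$, $I_2$ and outgoing link $I_3$, with flow capacities $C_1,C_3>0$, and suppose the fundamental diagram of $I_1$ satisfies (F). Fix a split $\eta_1\in(0,1)$, a cycle length $\Delta_A>0$ and the signal control $u_1$ with cycle $\Delta_A$ and split $\eta_1$. Fix data $N_{ini}$ on $[a_1,b_1]$ and $N_{up}$ on $[0,T]$. Assume no spillback, i.e. the supply of $I_3$ is constant, $S_3(t)\equiv C_3$. Let $N^{\Delta_A}$ and $N^0$ be the Lax–Hopf solutions on $I_1$ with data $(N_{ini},N_{up},N^{\Delta_A}_{down})$ and $(N_{ini},N_{up},N^{0}_{down})$ respectively. Then $N^{\Delta_A}(t,x)\to N^0(t,x)$ uniformly on $[0,T]\times[a_1,b_1]$ as $\Delta_A\to0$ (with $\eta_1$, $N_{ini}$, $N_{up}$ fixed).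
   Context: Assumption (F): $f:[0,\rho_j]\to[0,C]$ continuous and concave, $f(0)=f(\rho_j)=0$, $C=\max f$; $v=f'(0+)$, $-w=f'(\rho_j-)$ finite; $f^*(u)=\sup_{\rho\in[0,\rho_j]}\{f(\rho)-u\rho\}$, $u\in[-w,v]$. Lax–Hopf solution on $[a,b]$ with data $(N_{ini},N_{up},N_{down})$: with $\mathcal{C}(0,x)=N_{ini}(x)$, $\mathcal{C}(s,a)=N_{up}(s)$, $\mathcal{C}(s,b)=N_{down}(s)$ (minimum at corners), $\mathcal{C}=+\infty$ elsewhere, set $N(t,x)=\inf_{u\in[-w,v],\tau\ge0}\{\mathcal{C}(t-\tau,x-\tau u)+\tau f^*(u)\}$. Signal control: $u_1:[0,T]\to\{0,1\}$ is $\Delta_A$-periodic and, for some offset $\theta$, $u_1(t)=1$ iff $(t-\theta)\bmod\Delta_A\in[0,\eta_1\Delta_A)$ (green time $\eta_1\Delta_A$ per cycle). Effective supply for $I_1$: $\mathcal{S}_3^1(t)=\min\{C_1,S_3(t)\}$. Downstream data: on-and-off model $N^{\Delta_A}_{down}(t)=\int_0^t\mathcal{S}^1_3(\tau)u_1(\tau)\,d\tau$; continuum model $N^0_{down}(t)=\int_0^t\eta_1\mathcal{S}^1_3(\tau)\,d\tau$. *)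

From Stdlib Require Import Reals Lra.
Open Scope R_scope.

Definition is_inf (E : R -> Prop) (m : R) : Prop :=
  (forall y, E y -> m <= y) /\
  (forall m', (forall y, E y -> m' <= y) -> m' <= m).

Definition concave_on (f : R -> R) (lo hi : R) : Prop :=
  forall x y l, lo <= x <= hi -> lo <= y <= hi -> 0 <= l <= 1 ->
    l * f x + (1 - l) * f y <= f (l * x + (1 - l) * y).

(* Set of values C(t - tau, x - tau u) + tau f*(u), u in [-w,v], tau >= 0,
   over the points where the value condition C is finite (initial line t=0 on
   [a,b], upstream boundary x=a, downstream boundary x=b, times >= 0).
   Taking the infimum over the union gives the minimum at the corners. *)
Definition LH_set (w v a b : R) (fstar Nini Nup Ndown : R -> R) (t x : R)
  : R -> Prop :=
  fun y => exists u tau, -w <= u <= v /\ 0 <= tau /\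
    ( (t - tau = 0 /\ a <= x - tau * u <= b /\
         y = Nini (x - tau * u) + tau * fstar u)
   \/ (0 <= t - tau /\ x - tau * u = a /\ y = Nup (t - tau) + tau * fstar u)
   \/ (0 <= t - tau /\ x - tau * u = b /\ y = Ndown (t - tau) + tau * fstar u)).

(* Signal control with cycle D, split eta, offset theta:
   u1(t) = 1 iff (t - theta) mod D in [0, eta D), i.e.
   frac((t - theta)/D) < eta. *)
Definition signal (D eta theta t : R) : R :=
  if Rlt_dec (frac_part ((t - theta) / D)) eta then 1 else 0.

From Stdlib Require Import Reals Lra Lia ZArith.
From Coquelicot Require Import Coquelicot.
Open Scope R_scope.

(* Without spillback the effective supply is the constant c = min(C1, C3), so
   the on-and-off downstream data is the integral of c * u1 and the continuum
   data is eta1 * c * t.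

   1. Averaging of the signal.  On each cycle [s, s + D) of the signal the
      green phase is exactly [s, s + eta D).  Integrating cycle by cycle, the
      integral of c * u1 over [0, t] differs from eta c t only by the two
      incomplete cycles at the ends, hence by at most c D (lemma
      [on_off_average]).
   2. Stability of Lax-Hopf solutions.  The Lax-Hopf formula is an infimum
      over a set whose elements depend on the downstream data only through a
      term N_down(t - tau); perturbing N_down by at most d in sup norm moves
      the infimum by at most d (lemma [LH_inf_stable]).

   Together: |N^D - N^0| <= c D uniformly, which tends to 0 with D.  The
   argument uses no property of the fundamental diagram beyond the shape of
   the Lax-Hopf formula. *)

Lemma Int_part_unique (x : R) (m : Z) :
  IZR m <= x < IZR m + 1 -> Int_part x = m.
Proof.
  intros [Hlo Hhi]. destruct (base_Int_part x) as [B1 B2].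
  assert (Hup : IZR (Int_part x - m) < 1) by (rewrite minus_IZR; lra).
  assert (Hdn : IZR (Int_part x - m) > -1) by (rewrite minus_IZR; lra).
  apply lt_IZR in Hup. apply Rgt_lt, lt_IZR in Hdn. lia.
Qed.

Lemma Int_part_monotone (x y : R) : x <= y -> (Int_part x <= Int_part y)%Z.
Proof.
  intros Hxy. destruct (base_Int_part x) as [A1 A2].
  destruct (base_Int_part y) as [B1 B2].
  assert (H : IZR (Int_part x) < IZR (Int_part y + 1)) by (rewrite plus_IZR; lra).
  apply lt_IZR in H. lia.
Qed.

Definition cycle_start (D theta : R) (m : Z) : R := theta + D * IZR m.

Definition cycle_index (D theta x : R) : Z := Int_part ((x - theta) / D).

Lemma cycle_index_spec (D theta x : R) : 0 < D ->
  cycle_start D theta (cycle_index D theta x) <= x <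
  cycle_start D theta (cycle_index D theta x) + D.
Proof.
  intros HD. unfold cycle_start, cycle_index.
  destruct (base_Int_part ((x - theta) / D)) as [B1 B2].
  assert (E : (x - theta) / D * D = x - theta) by (field; lra).
  split; nra.
Qed.

Lemma signal_in_cycle (D eta theta x : R) (m : Z) : 0 < D ->
  cycle_start D theta m <= x < cycle_start D theta m + D ->
  signal D eta theta x =
    if Rlt_dec (x - cycle_start D theta m) (eta * D) then 1 else 0.
Proof.
  intros HD Hx. set (s := cycle_start D theta m) in *. unfold signal, frac_part.
  assert (Ediv : (x - theta) / D - IZR m = (x - s) / D)
    by (unfold s, cycle_start; field; lra).
  assert (Hfrac : (x - s) / D * D = x - s) by (field; lra).
  rewrite (Int_part_unique _ m).
  2: { split; nra. }
  rewrite Ediv.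
  destruct (Rlt_dec ((x - s) / D) eta), (Rlt_dec (x - s) (eta * D));
    auto; exfalso; nra.
Qed.

Definition on_off (c D eta theta : R) (s : R) : R := c * signal D eta theta s.

Lemma is_RInt_const_R (k a b : R) : is_RInt (fun _ => k) a b (k * (b - a)).
Proof.
  replace (k * (b - a)) with (scal (b - a) k)
    by (unfold scal; simpl; unfold mult; simpl; ring).
  apply (@is_RInt_const R_NormedModule).
Qed.

Lemma on_off_partial_cycle (c D eta theta y : R) (m : Z) :
  0 < D -> 0 < eta < 1 -> 0 <= y <= D ->
  is_RInt (on_off c D eta theta) (cycle_start D theta m)
    (cycle_start D theta m + y) (c * Rmin y (eta * D)).
Proof.
  intros HD He Hy. set (s := cycle_start D theta m).
  assert (Hgreen : forall x, s <= x < s + eta * D -> on_off c D eta theta x = c).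
  { intros x Hx. unfold on_off. rewrite (signal_in_cycle _ _ _ _ m) by (auto; fold s; nra).
    fold s. destruct (Rlt_dec _ _); [ring | lra]. }
  assert (Hred : forall x, s + eta * D <= x < s + D -> on_off c D eta theta x = 0).
  { intros x Hx. unfold on_off. rewrite (signal_in_cycle _ _ _ _ m) by (auto; fold s; nra).
    fold s. destruct (Rlt_dec _ _); [lra | ring]. }
  destruct (Rle_dec y (eta * D)) as [Hle | Hgt].
  - rewrite Rmin_left by lra.
    apply (is_RInt_ext (fun _ => c)).
    + intros x Hx. rewrite Rmin_left, Rmax_right in Hx by lra.
      symmetry; apply Hgreen; lra.
    + replace (c * y) with (c * (s + y - s)) by ring. apply is_RInt_const_R.
  - rewrite Rmin_right by lra.
    replace (c * (eta * D)) with (plus (c * (s + eta * D - s)) (0 * (s + y - (s + eta * D))))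
      by (unfold plus; simpl; ring).
    apply (@is_RInt_Chasles R_NormedModule) with (s + eta * D).
    + apply (is_RInt_ext (fun _ => c)); [|apply is_RInt_const_R].
      intros x Hx. rewrite Rmin_left, Rmax_right in Hx by nra.
      symmetry; apply Hgreen; lra.
    + apply (is_RInt_ext (fun _ => 0)); [|apply is_RInt_const_R].
      intros x Hx. rewrite Rmin_left, Rmax_right in Hx by lra.
      symmetry; apply Hred; lra.
Qed.

Lemma on_off_full_cycles (c D eta theta : R) (m : Z) (n : nat) :
  0 < D -> 0 < eta < 1 ->
  is_RInt (on_off c D eta theta)
    (cycle_start D theta m) (cycle_start D theta (m + Z.of_nat n))
    (INR n * (c * (eta * D))).
Proof.
  intros HD He. induction n as [|n IH].
  - rewrite Z.add_0_r. replace (INR 0 * (c * (eta * D))) with (@zero R_NormedModule)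
      by (unfold zero; simpl; ring).
    apply is_RInt_point.
  - replace (INR (S n) * (c * (eta * D)))
      with (@plus R_NormedModule (INR n * (c * (eta * D))) (c * Rmin D (eta * D)))
      by (rewrite Rmin_right, S_INR by nra; unfold plus; simpl; ring).
    apply (@is_RInt_Chasles R_NormedModule) with (cycle_start D theta (m + Z.of_nat n)); auto.
    replace (cycle_start D theta (m + Z.of_nat (S n)))
      with (cycle_start D theta (m + Z.of_nat n) + D)
      by (unfold cycle_start; rewrite Nat2Z.inj_succ, Z.add_succ_r, succ_IZR; ring).
    apply on_off_partial_cycle; auto; lra.
Qed.

Lemma partial_cycle_defect (b eta D : R) : 0 <= b < D -> 0 < eta < 1 ->
  0 <= Rmin b (eta * D) - eta * b <= D.
Proof. intros Hb He. unfold Rmin. destruct (Rle_dec b (eta * D)); nra. Qed.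

(* Split [0, t] at the cycle starts around 0
   and t: the complete cycles contribute exactly the average, and each of the
   two incomplete cycles contributes a defect in [0, c D]. *)
Lemma on_off_average (c D eta theta t I : R) :
  0 < D -> 0 < eta < 1 -> 0 <= c -> 0 <= t ->
  is_RInt (on_off c D eta theta) 0 t I -> Rabs (I - eta * c * t) <= c * D.
Proof.
  intros HD He Hc Ht HI.
  set (m0 := cycle_index D theta 0). set (m1 := cycle_index D theta t).
  assert (Hm : (m0 <= m1)%Z).
  { apply Int_part_monotone. unfold Rdiv. apply Rmult_le_compat_r; [|lra].
    apply Rlt_le, Rinv_0_lt_compat; auto. }
  pose proof (cycle_index_spec D theta 0 HD) as H0. fold m0 in H0.
  pose proof (cycle_index_spec D theta t HD) as H1. fold m1 in H1.
  set (al := 0 - cycle_start D theta m0) in *.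
  set (be := t - cycle_start D theta m1) in *.
  assert (Hal : 0 <= al < D) by (unfold al; lra).
  assert (Hbe : 0 <= be < D) by (unfold be; lra).
  set (n := Z.to_nat (m1 - m0)).
  assert (En : (m0 + Z.of_nat n)%Z = m1) by (unfold n; rewrite Z2Nat.id; lia).
  assert (EnR : INR n = IZR m1 - IZR m0)
    by (rewrite INR_IZR_INZ; unfold n; rewrite Z2Nat.id by lia; apply minus_IZR).
  pose proof (on_off_partial_cycle c D eta theta al m0 HD He ltac:(lra)) as P0.
  pose proof (on_off_partial_cycle c D eta theta be m1 HD He ltac:(lra)) as P1.
  pose proof (on_off_full_cycles c D eta theta m0 n HD He) as PM.
  rewrite En in PM.
  replace (cycle_start D theta m0 + al) with 0 in P0 by (unfold al; ring).
  replace (cycle_start D theta m1 + be) with t in P1 by (unfold be; ring).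
  pose proof (@is_RInt_Chasles R_NormedModule _ _ _ _ _ _
               (@is_RInt_Chasles R_NormedModule _ _ _ _ _ _ (is_RInt_swap _ _ _ _ P0) PM) P1)
    as Hsplit.
  rewrite <- (is_RInt_unique _ _ _ _ HI), (is_RInt_unique _ _ _ _ Hsplit).
  unfold plus, opp; simpl.
  pose proof (partial_cycle_defect al eta D ltac:(lra) He) as F0.
  pose proof (partial_cycle_defect be eta D ltac:(lra) He) as F1.
  assert (Et : t = D * INR n + be - al)
    by (rewrite EnR; unfold al, be, cycle_start; ring).
  rewrite Et. apply Rabs_le.
  replace (- (c * Rmin al (eta * D)) + INR n * (c * (eta * D)) + c * Rmin be (eta * D)
           - eta * c * (D * INR n + be - al))
    with (c * ((Rmin be (eta * D) - eta * be) - (Rmin al (eta * D) - eta * al))) by ring.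
  split; nra.
Qed.

Lemma inf_close (E1 E2 : R -> Prop) (m1 m2 d : R) :
  is_inf E1 m1 -> is_inf E2 m2 ->
  (forall y, E1 y -> exists y', E2 y' /\ y' <= y + d) ->
  (forall y, E2 y -> exists y', E1 y' /\ y' <= y + d) -> Rabs (m1 - m2) <= d.
Proof.
  intros [L1 G1] [L2 G2] H12 H21.
  assert (m2 - d <= m1).
  { apply G1. intros y Hy. destruct (H12 y Hy) as [y' [Hy' Hle]]. specialize (L2 y' Hy'). lra. }
  assert (m1 - d <= m2).
  { apply G2. intros y Hy. destruct (H21 y Hy) as [y' [Hy' Hle]]. specialize (L1 y' Hy'). lra. }
  apply Rabs_le. lra.
Qed.

(* Changing the downstream data by at most d on [0, t] changes each candidate
   value of the Lax-Hopf formula at time t by at most d: only the downstream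
   term N_down(t - tau), with 0 <= t - tau <= t, depends on it. *)
Lemma LH_set_shift (w v a b : R) (fstar Nini Nup Nd1 Nd2 : R -> R) (t x d : R) :
  0 <= d -> (forall s, 0 <= s <= t -> Rabs (Nd1 s - Nd2 s) <= d) ->
  forall y, LH_set w v a b fstar Nini Nup Nd1 t x y ->
  exists y', LH_set w v a b fstar Nini Nup Nd2 t x y' /\ y' <= y + d.
Proof.
  intros Hd HN y [u [tau [Hu [Htau Hcase]]]].
  destruct Hcase as [Hini | [Hup | [Hs [Hx Hy]]]].
  - exists y. split; [exists u, tau; auto | lra].
  - exists y. split; [exists u, tau; auto | lra].
  - exists (Nd2 (t - tau) + tau * fstar u). split.
    + exists u, tau. split; [exact Hu|]. split; [exact Htau|]. right. right. auto.
    + subst y. pose proof (HN (t - tau) ltac:(lra)) as Hclose.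
      apply Rabs_le_between in Hclose. lra.
Qed.

Lemma LH_inf_stable (w v a b : R) (fstar Nini Nup Nd1 Nd2 : R -> R) (t x d m1 m2 : R) :
  0 <= d -> (forall s, 0 <= s <= t -> Rabs (Nd1 s - Nd2 s) <= d) ->
  is_inf (LH_set w v a b fstar Nini Nup Nd1 t x) m1 ->
  is_inf (LH_set w v a b fstar Nini Nup Nd2 t x) m2 ->
  Rabs (m1 - m2) <= d.
Proof.
  intros Hd HN H1 H2. apply (inf_close _ _ _ _ _ H1 H2).
  - apply LH_set_shift; auto.
  - apply LH_set_shift; auto. intros s Hs. rewrite Rabs_minus_sym. auto.
Qed.

Theorem theorem4p1
  (rhoj Cmax v w : R) (f fstar : R -> R)
  (a1 b1 T C1 C3 eta1 theta : R) (Nini Nup S3 : R -> R)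
  (NdownD : R -> R -> R) (Ndown0 : R -> R)
  (ND : R -> R -> R -> R) (N0 : R -> R -> R) :
  (* Assumption (F) on the fundamental diagram f of I_1 *)
  0 < rhoj ->
  (forall r, 0 <= r <= rhoj -> limit1_in f (fun z => 0 <= z <= rhoj) (f r) r) ->
  concave_on f 0 rhoj ->
  f 0 = 0 -> f rhoj = 0 ->
  (forall r, 0 <= r <= rhoj -> 0 <= f r <= Cmax) ->
  (exists r, 0 <= r <= rhoj /\ f r = Cmax) ->
  (forall eps, 0 < eps -> exists dl, 0 < dl /\
     forall h, 0 < h < dl -> h <= rhoj -> Rabs ((f h - f 0) / h - v) < eps) ->
  (forall eps, 0 < eps -> exists dl, 0 < dl /\
     forall h, 0 < h < dl -> h <= rhoj ->
       Rabs ((f (rhoj - h) - f rhoj) / (- h) - (- w)) < eps) ->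
  (forall u, - w <= u <= v ->
     is_lub (fun y => exists r, 0 <= r <= rhoj /\ y = f r - u * r) (fstar u)) ->
  (* junction / signal parameters *)
  a1 < b1 -> 0 < T -> 0 < C1 -> 0 < C3 -> 0 < eta1 < 1 ->
  (* no spillback *)
  (forall t, S3 t = C3) ->
  (* on-and-off downstream data, for every cycle length D > 0 *)
  (forall D t, 0 < D -> 0 <= t <= T ->
     exists pr : Riemann_integrable
                   (fun s => Rmin C1 (S3 s) * signal D eta1 theta s) 0 t,
       NdownD D t = RiemannInt pr) ->
  (* continuum downstream data *)
  (forall t, 0 <= t <= T ->
     exists pr : Riemann_integrable (fun s => eta1 * Rmin C1 (S3 s)) 0 t,
       Ndown0 t = RiemannInt pr) ->
  (* Lax-Hopf solutions *)
  (forall D t x, 0 < D -> 0 <= t <= T -> a1 <= x <= b1 ->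
     is_inf (LH_set w v a1 b1 fstar Nini Nup (NdownD D) t x) (ND D t x)) ->
  (forall t x, 0 <= t <= T -> a1 <= x <= b1 ->
     is_inf (LH_set w v a1 b1 fstar Nini Nup Ndown0 t x) (N0 t x)) ->
  (* uniform convergence as D -> 0 *)
  forall eps, 0 < eps -> exists dl, 0 < dl /\
    forall D, 0 < D < dl -> forall t x, 0 <= t <= T -> a1 <= x <= b1 ->
      Rabs (ND D t x - N0 t x) < eps.
Proof.
  intros _ _ _ _ _ _ _ _ _ _ _ _ HC1 HC3 Heta HS3 HND HN0 HLD HL0 eps Heps.
  set (c := Rmin C1 C3).
  assert (Hc : 0 < c) by (unfold c, Rmin; destruct (Rle_dec C1 C3); lra).
  assert (Hdown : forall D s, 0 < D -> 0 <= s <= T ->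
                   Rabs (NdownD D s - Ndown0 s) <= c * D).
  { intros D s HD Hs.
    destruct (HND D s HD Hs) as [pr E1]. destruct (HN0 s Hs) as [pr0 E0].
    rewrite E1, E0, <- !RInt_Reals.
    rewrite (RInt_ext (fun s0 => eta1 * Rmin C1 (S3 s0)) (fun _ => eta1 * c))
      by (intros; rewrite HS3; reflexivity).
    rewrite (is_RInt_unique _ _ _ _ (is_RInt_const_R (eta1 * c) 0 s)), Rminus_0_r.
    apply (on_off_average c D eta1 theta s); auto; try lra.
    apply (is_RInt_ext (fun s0 => Rmin C1 (S3 s0) * signal D eta1 theta s0)).
    - intros y _. unfold on_off, c. rewrite HS3. reflexivity.
    - apply (@RInt_correct R_CompleteNormedModule), ex_RInt_Reals_1, pr. }
  exists (eps / c). split; [apply Rdiv_lt_0_compat; auto|].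
  intros D [HD HDl] t x Ht Hx.
  assert (HcD : c * D < eps)
    by (apply (Rmult_lt_compat_l c) in HDl; auto; field_simplify in HDl; lra).
  apply Rle_lt_trans with (c * D); auto.
  apply (LH_inf_stable w v a1 b1 fstar Nini Nup (NdownD D) Ndown0 t x);
    [nra | | apply HLD | apply HL0]; auto.
  intros s Hs. apply Hdown; auto; lra.
Qed.
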